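(* Let $G$ be a topological group which is either completely metrizable or locally compact Hausdorff, let $H$ be an $\aleph_1$-free group, and let $\phi:G\to H$ be an abstract group homomorphism. Then for every finitely generated subgroup $F\le H$ there exists an open neighborhood $U\subseteq G$ of $1_G$ such that $\phi(U)\cap F=\{1_H\}$.
   Context: A group is $\aleph_1$-free if every countable subgroup is free. *)

From Stdlib Require Import Reals List.
Import ListNotations.
Open Scope R_scope.

Record group := mkGroup {
  gcar :> Type;
  gmul : gcar -> gcar -> gcar;
  ginv : gcar -> gcar;
  gone : gcar;
  gmul_assoc : forall x y z, gmul x (gmul y z) = gmul (gmul x y) z;
  gmul_1l : forall x, gmul gone x = x;
  gmul_Vl : forall x, gmul (ginv x) x = gone
}.

Definition is_hom (G H : group) (f : G -> H) : Prop :=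
  forall x y, f (gmul G x y) = gmul H (f x) (f y).

Definition is_subgroup (H : group) (S : H -> Prop) : Prop :=
  S (gone H) /\ (forall x y, S x -> S y -> S (gmul H x y)) /\
  (forall x, S x -> S (ginv H x)).

Fixpoint word_eval (H : group) (w : list (bool * H)) : H :=
  match w with
  | [] => gone H
  | (b, x) :: w' => gmul H (if b then x else ginv H x) (word_eval H w')
  end.

Definition word_over (H : group) (X : H -> Prop) (w : list (bool * H)) : Prop :=
  forall l, In l w -> X (snd l).

Fixpoint reduced (H : group) (w : list (bool * H)) : Prop :=
  match w with
  | (b1, x1) :: (((b2, x2) :: _) as w') =>
      ~ (x1 = x2 /\ b1 <> b2) /\ reduced H w'
  | _ => True
  end.

Definition generates (H : group) (X S : H -> Prop) : Prop :=
  forall x, S x <-> exists w, word_over H X w /\ word_eval H w = x.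

Definition free_basis (H : group) (X S : H -> Prop) : Prop :=
  generates H X S /\
  forall w, word_over H X w -> reduced H w -> w <> [] -> word_eval H w <> gone H.

Definition free_subgroup (H : group) (S : H -> Prop) : Prop :=
  exists X, free_basis H X S.

Definition countable_set {T : Type} (S : T -> Prop) : Prop :=
  (forall x, ~ S x) \/ exists f : nat -> T, (forall n, S (f n)) /\ forall x, S x -> exists n, f n = x.

Definition aleph1_free (H : group) : Prop :=
  forall S, is_subgroup H S -> countable_set S -> free_subgroup H S.

Definition fin_gen_subgroup (H : group) (F : H -> Prop) : Prop :=
  exists l : list H, generates H (fun x => In x l) F.

Record topology (T : Type) := mkTop {
  is_open : (T -> Prop) -> Prop;
  open_full : is_open (fun _ => True);
  open_inter : forall U V, is_open U -> is_open V -> is_open (fun x => U x /\ V x);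
  open_union : forall (Fam : (T -> Prop) -> Prop),
      (forall U, Fam U -> is_open U) -> is_open (fun x => exists U, Fam U /\ U x)
}.
Arguments is_open {T} t U.

Definition topological_group (G : group) (t : topology G) : Prop :=
  (forall W x y, is_open t W -> W (gmul G x y) ->
     exists U V, is_open t U /\ is_open t V /\ U x /\ V y /\
       forall u v, U u -> V v -> W (gmul G u v)) /\
  (forall W, is_open t W -> is_open t (fun x => W (ginv G x))).

Definition hausdorff {T} (t : topology T) : Prop :=
  forall x y, x <> y -> exists U V, is_open t U /\ is_open t V /\ U x /\ V y /\
    forall z, ~ (U z /\ V z).

Definition compact {T} (t : topology T) (K : T -> Prop) : Prop :=
  forall Fam : (T -> Prop) -> Prop,
    (forall U, Fam U -> is_open t U) ->
    (forall x, K x -> exists U, Fam U /\ U x) ->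
    exists l : list (T -> Prop), (forall U, In U l -> Fam U) /\
      forall x, K x -> exists U, In U l /\ U x.

Definition locally_compact {T} (t : topology T) : Prop :=
  forall x, exists U K, is_open t U /\ U x /\ compact t K /\ forall y, U y -> K y.

Definition is_metric {T} (d : T -> T -> R) : Prop :=
  (forall x y, 0 <= d x y) /\ (forall x y, d x y = 0 <-> x = y) /\
  (forall x y, d x y = d y x) /\ (forall x y z, d x z <= d x y + d y z).

Definition metric_induces {T} (d : T -> T -> R) (t : topology T) : Prop :=
  forall U, is_open t U <->
    forall x, U x -> exists eps, 0 < eps /\ forall y, d x y < eps -> U y.

Definition metric_complete {T} (d : T -> T -> R) : Prop :=
  forall u : nat -> T,
    (forall eps, 0 < eps -> exists N, forall m n, (N <= m)%nat -> (N <= n)%nat -> d (u m) (u n) < eps) ->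
    exists l, forall eps, 0 < eps -> exists N, forall n, (N <= n)%nat -> d (u n) l < eps.

Definition completely_metrizable {T} (t : topology T) : Prop :=
  exists d, is_metric d /\ metric_induces d t /\ metric_complete d.

From Pilot Require Import Defs.
From Stdlib Require Import Reals List.
From Stdlib Require Import Lra Lia Arith Wf_nat Classical ClassicalEpsilon
  FunctionalExtensionality PropExtensionality Cantor.
Import ListNotations.
Local Open Scope nat_scope.

(* If every neighbourhood of 1 contained some g with phi g a nontrivial
   element of F, one could pick such g_n converging to 1 so fast that, by
   completeness or compactness, there are h_n with h_n = g_n h_(n+1)^(m_n) for
   exponents m_n chosen large compared with the length of phi g_n as a word in
   the generators of F.  The images x_n = phi h_n live in the countable, hence
   free, subgroup generated by F and the x_n.  In a free group the reduced
   length of x^m is at least |x| + m - 1 for x <> 1, so the relation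
   x_n = (phi g_n) x_(n+1)^(m_n) forces |x_(n+1)| < |x_n| for all large n. *)

Section GroupLaws.
Variable G : group.
Local Notation "x ** y" := (gmul G x y) (at level 40, left associativity).
Local Notation "x ^-" := (ginv G x) (at level 30).
Local Notation e := (gone G).

Lemma gmul_idem_1 (y : G) : y ** y = y -> y = e.
Proof.
  intro hy. transitivity (y^- ** (y ** y)).
  - now rewrite gmul_assoc, gmul_Vl, gmul_1l.
  - rewrite hy. apply gmul_Vl.
Qed.

Lemma gmul_Vr (x : G) : x ** x^- = e.
Proof.
  apply gmul_idem_1. rewrite <- gmul_assoc, (gmul_assoc G (x^-) x).
  now rewrite gmul_Vl, gmul_1l.
Qed.

Lemma gmul_1r (x : G) : x ** e = x.
Proof. now rewrite <- (gmul_Vl G x), gmul_assoc, gmul_Vr, gmul_1l. Qed.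

Lemma gmul_cancel_l (a x y : G) : a ** x = a ** y -> x = y.
Proof.
  intro H. rewrite <- (gmul_1l G x), <- (gmul_1l G y), <- (gmul_Vl G a),
    <- !gmul_assoc, H. reflexivity.
Qed.

Lemma gmul_cancel_r (a x y : G) : x ** a = y ** a -> x = y.
Proof.
  intro H. rewrite <- (gmul_1r x), <- (gmul_1r y), <- (gmul_Vr a),
    !gmul_assoc, H. reflexivity.
Qed.

Lemma ginv_mul (x y : G) : (x ** y)^- = y^- ** x^-.
Proof.
  apply (gmul_cancel_l (x ** y)). rewrite gmul_Vr, <- gmul_assoc.
  now rewrite (gmul_assoc G y), gmul_Vr, gmul_1l, gmul_Vr.
Qed.

Lemma ginv_inv (x : G) : (x^-)^- = x.
Proof. apply (gmul_cancel_l (x^-)). now rewrite gmul_Vr, gmul_Vl. Qed.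

Lemma ginv_1 : e^- = e.
Proof. rewrite <- (gmul_1l G (e^-)). apply gmul_Vr. Qed.

Fixpoint gpow (x : G) (n : nat) : G :=
  match n with 0 => e | S k => x ** gpow x k end.

Lemma gpow_1 n : gpow e n = e.
Proof. induction n; simpl; auto. rewrite IHn. apply gmul_1l. Qed.

Lemma gpow_conj (u x : G) n : gpow (u ** x ** u^-) n = u ** gpow x n ** u^-.
Proof.
  induction n; simpl.
  - now rewrite gmul_1r, gmul_Vr.
  - rewrite IHn, !gmul_assoc. f_equal. rewrite <- !gmul_assoc.
    now rewrite (gmul_assoc G (u^-) u), gmul_Vl, gmul_1l.
Qed.

End GroupLaws.

Lemma hom_1 (G H : group) (f : G -> H) : is_hom G H f -> f (gone G) = gone H.
Proof. intro Hf. apply gmul_idem_1. now rewrite <- Hf, gmul_1l. Qed.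

Lemma hom_gpow (G H : group) (f : G -> H) x n :
  is_hom G H f -> f (gpow G x n) = gpow H (f x) n.
Proof. intro Hf. induction n; simpl. now apply hom_1. now rewrite Hf, IHn. Qed.

(** * Reduced words *)

Lemma list_sum_in a l : In a l -> a <= list_sum l.
Proof.
  intro h. destruct (in_split a l h) as [l1 [l2 ->]].
  rewrite list_sum_app. simpl. lia.
Qed.

Lemma nil_or_snoc {A} (w : list A) : w = [] \/ exists p a, w = p ++ [a].
Proof.
  destruct w as [|x w]; [now left|right].
  destruct (exists_last (l := x :: w) ltac:(discriminate)) as [p [a E]]. eauto.
Qed.

Section Words.
Variable H : group.
Local Notation "x ** y" := (gmul H x y) (at level 40, left associativity).
Local Notation "x ^-" := (ginv H x) (at level 30).
Local Notation e := (gone H).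
Local Notation word := (list (bool * H)).
Local Notation ev := (word_eval H).

Definition letter_val (a : bool * H) : H := if fst a then snd a else (snd a)^-.
Definition letter_inv (a : bool * H) : bool * H := (negb (fst a), snd a).
Definition word_inv (w : word) : word := rev (map letter_inv w).
Definition cancels (a b : bool * H) : Prop := snd a = snd b /\ fst a <> fst b.

Definition join_reduced (x y : word) : Prop :=
  match x, y with _ :: _, b :: _ => ~ cancels (last x b) b | _, _ => True end.

Lemma ev_cons a w : ev (a :: w) = letter_val a ** ev w.
Proof. now destruct a. Qed.

Lemma ev_app x y : ev (x ++ y) = ev x ** ev y.
Proof.
  induction x; simpl app.
  - now rewrite gmul_1l.
  - now rewrite !ev_cons, IHx, gmul_assoc.
Qed.

Lemma letter_val_inv a : letter_val (letter_inv a) = (letter_val a)^-.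
Proof. destruct a as [[] x]; unfold letter_val, letter_inv; simpl; auto. now rewrite ginv_inv. Qed.

Lemma word_inv_cons a w : word_inv (a :: w) = word_inv w ++ [letter_inv a].
Proof. reflexivity. Qed.

Lemma word_inv_app x y : word_inv (x ++ y) = word_inv y ++ word_inv x.
Proof. unfold word_inv. now rewrite map_app, rev_app_distr. Qed.

Lemma ev_word_inv w : ev (word_inv w) = (ev w)^-.
Proof.
  induction w.
  - simpl. now rewrite ginv_1.
  - rewrite word_inv_cons, ev_app, IHw, !ev_cons. change (ev []) with e.
    now rewrite gmul_1r, letter_val_inv, ginv_mul.
Qed.

Lemma length_word_inv w : length (word_inv w) = length w.
Proof. unfold word_inv. now rewrite length_rev, length_map. Qed.

Lemma cancels_sym a b : cancels a b -> cancels b a.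
Proof. unfold cancels; intros [h1 h2]; split; auto. Qed.

Lemma cancels_inv a b : cancels a b -> b = letter_inv a.
Proof.
  destruct a as [[] x], b as [[] y]; unfold cancels, letter_inv; simpl;
    intros [-> h]; congruence.
Qed.

Lemma ev_cancels a b w : cancels a b -> ev (a :: b :: w) = ev w.
Proof.
  intro h. apply cancels_inv in h. subst b. destruct a as [[] x]; simpl;
    rewrite gmul_assoc; [rewrite gmul_Vr | rewrite gmul_Vl]; apply gmul_1l.
Qed.

Lemma reduced_cons2 a b w :
  reduced H (a :: b :: w) <-> ~ cancels a b /\ reduced H (b :: w).
Proof. destruct a, b. unfold cancels. simpl. tauto. Qed.

Lemma reduced_app x y :
  reduced H (x ++ y) <-> reduced H x /\ reduced H y /\ join_reduced x y.
Proof.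
  induction x as [|a x IH].
  - simpl. tauto.
  - destruct x as [|c x].
    + destruct y as [|b y]; simpl app.
      * simpl. tauto.
      * rewrite reduced_cons2. simpl. tauto.
    + change ((a :: c :: x) ++ y) with (a :: (c :: x) ++ y).
      change (reduced H (a :: (c :: x) ++ y)) with (reduced H (a :: c :: x ++ y)).
      rewrite reduced_cons2. change (c :: x ++ y) with ((c :: x) ++ y).
      rewrite IH, reduced_cons2.
      assert (join_reduced (a :: c :: x) y <-> join_reduced (c :: x) y)
        by (destruct y; simpl; tauto).
      tauto.
Qed.

Lemma last_app {A} (x y : list A) d : y <> [] -> last (x ++ y) d = last y d.
Proof.
  intro h. rewrite (app_removelast_last d h) at 1.
  now rewrite app_assoc, last_last.
Qed.

Lemma join_reduced_app_l x y z : y <> [] -> (join_reduced (x ++ y) z <-> join_reduced y z).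
Proof.
  intro hy. destruct z as [|b z].
  - destruct (x ++ y), y; simpl; tauto.
  - destruct y as [|c y]; [congruence|].
    unfold join_reduced. destruct (x ++ c :: y) eqn:E; [destruct x; discriminate|].
    rewrite <- E, last_app by discriminate. tauto.
Qed.

Lemma join_reduced_app_r x y z : y <> [] -> (join_reduced x (y ++ z) <-> join_reduced x y).
Proof. intro hy. destruct y; [congruence|]. destruct x; simpl; tauto. Qed.

Lemma join_reduced_snoc p a b :
  ~ cancels a b -> join_reduced (p ++ [a]) [b].
Proof.
  intro h. unfold join_reduced. destruct (p ++ [a]) eqn:E; [destruct p; discriminate|].
  now rewrite <- E, last_last.
Qed.

Lemma reduced_word_inv w : reduced H w -> reduced H (word_inv w).
Proof.
  induction w as [|a w IH]; intro h; [exact I|].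
  rewrite word_inv_cons. apply reduced_app. split; [|split].
  - apply IH. destruct w; [exact I|]. apply reduced_cons2 in h. tauto.
  - exact I.
  - destruct w as [|b w]; [exact I|].
    apply reduced_cons2 in h. destruct h as [h _].
    rewrite word_inv_cons. apply join_reduced_snoc.
    intro hc. apply h, cancels_sym. unfold cancels, letter_inv in *; simpl in *.
    destruct hc as [h1 h2]. split; auto. intro h3. apply h2. now rewrite h3.
Qed.

Lemma cancels_letter_inv (a b : bool * H) : cancels a (letter_inv b) -> a = b.
Proof.
  destruct a as [[] x], b as [[] y]; unfold cancels, letter_inv; simpl;
    intros [-> h]; congruence.
Qed.

Lemma reduced_snoc_app_inv p1 a p2 b :
  reduced H (p1 ++ [a]) -> reduced H (p2 ++ [b]) -> a <> b ->
  reduced H ((p1 ++ [a]) ++ word_inv (p2 ++ [b])).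
Proof.
  intros r1 r2 hab. apply reduced_app. repeat split; auto.
  - now apply reduced_word_inv.
  - rewrite word_inv_app. change (word_inv [b]) with [letter_inv b].
    apply join_reduced_app_r; [discriminate|].
    apply join_reduced_snoc. intro h. now apply hab, cancels_letter_inv.
Qed.

Lemma not_reduced_split w : ~ reduced H w ->
  exists l1 a b l2, w = l1 ++ a :: b :: l2 /\ cancels a b.
Proof.
  induction w as [|a w IH]; intro h; [simpl in h; tauto|].
  destruct w as [|b w]; [destruct a; simpl in h; tauto|].
  rewrite reduced_cons2 in h. destruct (classic (cancels a b)) as [hc|hc].
  - now exists [], a, b, w.
  - destruct IH as [l1 [a' [b' [l2 [E hc']]]]]; [tauto|].
    exists (a :: l1), a', b', l2. rewrite E. auto.
Qed.

Section Over.
Variable X : H -> Prop.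

Lemma word_over_app x y : word_over H X (x ++ y) <-> word_over H X x /\ word_over H X y.
Proof.
  unfold word_over. split.
  - intro h; split; intros l hl; apply h, in_or_app; auto.
  - intros [h1 h2] l hl. apply in_app_or in hl. destruct hl; auto.
Qed.

Lemma word_over_cons a w : word_over H X (a :: w) <-> X (snd a) /\ word_over H X w.
Proof.
  unfold word_over. simpl. split.
  - intro h; split; auto.
  - intros [h1 h2] l [<-|hl]; auto.
Qed.

Lemma word_over_inv w : word_over H X w -> word_over H X (word_inv w).
Proof.
  unfold word_over, word_inv. intros h l hl. apply in_rev, in_map_iff in hl.
  destruct hl as [a [<- ha]]. exact (h a ha).
Qed.

Lemma word_over_nil : word_over H X [].
Proof. intros l []. Qed.

End Over.

Fixpoint word_pow (c : word) (m : nat) : word :=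
  match m with 0 => [] | S k => c ++ word_pow c k end.

Lemma ev_word_pow c m : ev (word_pow c m) = gpow H (ev c) m.
Proof. induction m; simpl; auto. now rewrite ev_app, IHm. Qed.

Lemma length_word_pow c m : length (word_pow c m) = m * length c.
Proof. induction m; simpl; auto. rewrite length_app, IHm. lia. Qed.

Lemma word_over_pow X c m : word_over H X c -> word_over H X (word_pow c m).
Proof. intro o. induction m; simpl; [apply word_over_nil|]. now apply word_over_app. Qed.

Lemma word_pow_nonnil c m : c <> [] -> word_pow c (S m) <> [].
Proof. intro h. simpl. destruct c; simpl; congruence. Qed.

Lemma join_reduced_pow_l c m z :
  c <> [] -> (join_reduced (word_pow c (S m)) z <-> join_reduced c z).
Proof.
  intro hc. induction m.
  - simpl. rewrite app_nil_r. tauto.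
  - change (word_pow c (S (S m))) with (c ++ word_pow c (S m)).
    rewrite join_reduced_app_l; [exact IHm|]. now apply word_pow_nonnil.
Qed.

Lemma reduced_word_pow c m :
  c <> [] -> reduced H c -> join_reduced c c -> reduced H (word_pow c (S m)).
Proof.
  intros hc r j. induction m.
  - simpl. now rewrite app_nil_r.
  - change (word_pow c (S (S m))) with (c ++ word_pow c (S m)).
    apply reduced_app. repeat split; auto. simpl. now rewrite join_reduced_app_r.
Qed.

Lemma cyclic_decomposition n w : length w <= n -> reduced H w -> w <> [] ->
  exists u c, w = u ++ c ++ word_inv u /\ c <> [] /\ join_reduced c c.
Proof.
  revert w. induction n as [|n IH]; intros w hl r hne.
  { destruct w; simpl in hl; [congruence|lia]. }
  destruct (classic (join_reduced w w)) as [hj|hj].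
  { exists [], w. simpl. now rewrite app_nil_r. }
  destruct w as [|a w0]; [congruence|].
  destruct w0 as [|x w0'].
  { exfalso. apply hj. simpl. intros [_ h]. auto. }
  destruct (exists_last (l := x :: w0') ltac:(discriminate)) as [mid [b E]].
  rewrite E in *. clear E x w0'.
  assert (hc : cancels b a).
  { apply NNPP. intro h. apply hj. unfold join_reduced.
    change (a :: mid ++ [b]) with ((a :: mid) ++ [b]). now rewrite last_last. }
  destruct mid as [|x mid'].
  { exfalso. apply reduced_cons2 in r. apply (proj1 r), cancels_sym, hc. }
  change (a :: (x :: mid') ++ [b]) with ([a] ++ (x :: mid') ++ [b]) in r.
  apply reduced_app in r. destruct r as [_ [r _]].
  apply reduced_app in r. destruct r as [r _].
  destruct (IH (x :: mid')) as [u [c [E [hc1 hc2]]]]; auto; [|discriminate|].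
  { simpl in hl |- *. rewrite length_app in hl. simpl in hl. lia. }
  exists (a :: u), c. split; auto.
  apply cancels_sym, cancels_inv in hc. subst b.
  rewrite E, word_inv_cons. simpl. now rewrite <- !app_assoc.
Qed.

Lemma reduced_power_word X w m :
  word_over H X w -> reduced H w -> w <> [] -> 1 <= m ->
  exists W, word_over H X W /\ reduced H W /\ ev W = gpow H (ev w) m /\
    length w + m - 1 <= length W.
Proof.
  intros o r hne hm.
  destruct (cyclic_decomposition (length w) w (le_n _) r hne) as [u [c [E [hc hj]]]].
  destruct m as [|m]; [lia|].
  exists (u ++ word_pow c (S m) ++ word_inv u).
  rewrite E in o, r.
  apply word_over_app in o. destruct o as [ou o]. apply word_over_app in o. destruct o as [oc ov].
  apply reduced_app in r. destruct r as [ru [r j1]].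
  apply reduced_app in r. destruct r as [rc [rv j2]].
  split; [|split; [|split]].
  - apply word_over_app; split; auto. apply word_over_app; split; auto.
    now apply word_over_pow.
  - apply reduced_app. split; auto. split.
    + apply reduced_app. split; [now apply reduced_word_pow|]. split; auto.
      now apply join_reduced_pow_l.
    + rewrite join_reduced_app_r by now apply word_pow_nonnil.
      rewrite join_reduced_app_r in j1 by auto.
      destruct u; simpl; auto. destruct c; [congruence|]. exact j1.
  - rewrite E, !ev_app, ev_word_pow, ev_word_inv, !(gmul_assoc H (ev u)),
      gpow_conj. reflexivity.
  - rewrite E, !length_app, length_word_pow. destruct c; [congruence|]. simpl. nia.
Qed.

End Words.

Section Span.
Variable H : group.
Local Notation ev := (word_eval H).

Definition span (X : H -> Prop) (y : H) : Prop := exists w, word_over H X w /\ ev w = y.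

Lemma span_subgroup X : is_subgroup H (span X).
Proof.
  split; [|split].
  - exists []. split; [apply word_over_nil|reflexivity].
  - intros a b [w1 [o1 <-]] [w2 [o2 <-]]. exists (w1 ++ w2).
    split; [now apply word_over_app|apply ev_app].
  - intros a [w [o <-]]. exists (word_inv H w).
    split; [now apply word_over_inv|apply ev_word_inv].
Qed.

Lemma span_letter (X : H -> Prop) y : X y -> span X y.
Proof.
  intro h. exists [(true, y)]. split; [|apply gmul_1r].
  apply word_over_cons. split; [exact h|apply word_over_nil].
Qed.

(* A word of length [k] is coded by [k] nested Cantor pairs, each letter code
   [c] standing for the sign [fst (of_nat c) =? 0] and the generator [gen (snd (of_nat c))]. *)
Lemma span_range_countable (gen : nat -> H) :
  countable_set (span (fun z => exists q, gen q = z)).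
Proof.
  set (letter := fun c => let (p, q) := Cantor.of_nat c in (Nat.eqb p 0, gen q)).
  set (decode := fix decode k c := match k with 0 => [] | S k' =>
     let (a, b) := Cantor.of_nat c in letter a :: decode k' b end).
  right. exists (fun c => let (k, r) := Cantor.of_nat c in ev (decode k r)). split.
  - intro c. destruct (Cantor.of_nat c) as [k r]. exists (decode k r). split; auto.
    revert r. induction k; intro r; [apply word_over_nil|].
    simpl. destruct (Cantor.of_nat r) as [a b]. apply word_over_cons. split; auto.
    unfold letter. destruct (Cantor.of_nat a). simpl. eauto.
  - intros y [w [o <-]].
    assert (exists r, decode (length w) r = w) as [r hr].
    { induction w as [|[bb z] w IH]; [now exists 0|].
      apply word_over_cons in o. destruct o as [[q hq] o]. destruct (IH o) as [r hr].
      exists (Cantor.to_nat (Cantor.to_nat (if bb then 0 else 1, q), r)).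
      cbn -[Cantor.of_nat Cantor.to_nat]. rewrite Cantor.cancel_of_to, hr.
      unfold letter. rewrite Cantor.cancel_of_to. simpl in hq. subst z.
      now destruct bb. }
    exists (Cantor.to_nat (length w, r)). now rewrite Cantor.cancel_of_to, hr.
Qed.

Lemma subgroup_word_closed (X : H -> Prop) w :
  is_subgroup H X -> word_over H X w -> X (ev w).
Proof.
  intros [h1 [hmul hinv]]. induction w as [|[[] y] w IH]; intro o; [exact h1| |];
    apply word_over_cons in o; destruct o as [hy o]; simpl; auto.
Qed.

Lemma countable_subgroup_containing (l : list H) (x : nat -> H) :
  exists X, is_subgroup H X /\ countable_set X /\
    (forall a, In a l -> X a) /\ forall n, X (x n).
Proof.
  set (gen := fun q => let (i, j) := Cantor.of_nat q in
                       match i with 0 => nth j l (x 0) | _ => x j end).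
  exists (span (fun z => exists q, gen q = z)).
  split; [apply span_subgroup|split; [apply span_range_countable|split]].
  - intros a ha. apply span_letter. destruct (In_nth l a (x 0) ha) as [j [_ hj]].
    exists (Cantor.to_nat (0, j)). unfold gen. now rewrite Cantor.cancel_of_to.
  - intro n. apply span_letter. exists (Cantor.to_nat (1, n)).
    unfold gen. now rewrite Cantor.cancel_of_to.
Qed.

End Span.

(** * Word length in a free group *)

Section FreeBasis.
Variable H : group.
Local Notation "x ** y" := (gmul H x y) (at level 40, left associativity).
Local Notation "x ^-" := (ginv H x) (at level 30).
Local Notation e := (gone H).
Local Notation ev := (word_eval H).
Variables S B : H -> Prop.
Hypothesis hB : free_basis H B S.

Lemma reduced_word_unique w1 w2 :
  word_over H B w1 -> word_over H B w2 -> reduced H w1 -> reduced H w2 ->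
  ev w1 = ev w2 -> w1 = w2.
Proof.
  destruct hB as [_ hfree].
  assert (hnil : forall w, word_over H B w -> reduced H w -> ev w = e -> w = []).
  { intros w o r E. apply NNPP. intro hne. exact (hfree w o r hne E). }
  revert w1 w2.
  enough (forall n w1 w2, length w1 <= n -> word_over H B w1 -> word_over H B w2 ->
    reduced H w1 -> reduced H w2 -> ev w1 = ev w2 -> w1 = w2) by (intros w1 w2; eauto).
  induction n as [|n IH]; intros w1 w2 hl o1 o2 r1 r2 E.
  { destruct w1; [|simpl in hl; lia]. symmetry. now apply hnil. }
  destruct (nil_or_snoc w1) as [->|[p1 [a ->]]]; [symmetry; now apply hnil|].
  destruct (nil_or_snoc w2) as [->|[p2 [b ->]]].
  { exfalso. apply hnil in E; auto. destruct p1; discriminate. }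
  destruct (classic (a = b)) as [<-|hab].
  - apply word_over_app in o1, o2. apply reduced_app in r1, r2.
    f_equal. apply IH; try tauto.
    + rewrite length_app in hl. simpl in hl. lia.
    + rewrite !ev_app in E. exact (gmul_cancel_r H _ _ _ E).
  - exfalso. apply (hfree ((p1 ++ [a]) ++ word_inv H (p2 ++ [b]))).
    + apply word_over_app. split; [exact o1|]. now apply word_over_inv.
    + now apply reduced_snoc_app_inv.
    + destruct p1; discriminate.
    + rewrite ev_app, ev_word_inv, E. apply gmul_Vr.
Qed.

Definition minimal_length (y : H) (n : nat) : Prop :=
  (exists w, word_over H B w /\ ev w = y /\ length w = n) /\
  (forall w, word_over H B w -> ev w = y -> n <= length w).

Definition word_length (y : H) : nat := epsilon (inhabits 0) (minimal_length y).

Lemma word_length_spec y : S y -> minimal_length y (word_length y).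
Proof.
  intro hy. unfold word_length. apply epsilon_spec.
  set (P := fun n => exists w, word_over H B w /\ ev w = y /\ length w = n).
  destruct (dec_inh_nat_subset_has_unique_least_element P (fun n => classic (P n)))
    as [n [[hn hmin] _]].
  { destruct (proj1 (proj1 hB y) hy) as [w [o E]]. now exists (length w), w. }
  exists n. split; auto. intros w o E. apply hmin. now exists w.
Qed.

Lemma word_length_le w : S (ev w) -> word_over H B w -> word_length (ev w) <= length w.
Proof. intros hS o. now apply (proj2 (word_length_spec _ hS)). Qed.

Lemma minimal_word_reduced w : word_over H B w ->
  (forall w', word_over H B w' -> ev w' = ev w -> length w <= length w') -> reduced H w.
Proof.
  intros o hmin. apply NNPP. intro hr.
  destruct (not_reduced_split H w hr) as [l1 [a [b [l2 [-> hc]]]]].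
  apply word_over_app in o. destruct o as [o1 o2].
  enough (length (l1 ++ a :: b :: l2) <= length (l1 ++ l2)) by (rewrite !length_app in *; simpl in *; lia).
  apply hmin.
  - apply word_over_app. split; auto. intros l hl. apply o2. simpl; auto.
  - now rewrite !ev_app, ev_cancels.
Qed.

Lemma word_length_reduced w : word_over H B w -> reduced H w -> word_length (ev w) = length w.
Proof.
  intros o r.
  assert (hS : S (ev w)) by (apply (proj1 hB); eauto).
  destruct (word_length_spec _ hS) as [[w0 [o0 [E0 L0]]] hmin].
  assert (r0 : reduced H w0).
  { apply minimal_word_reduced; auto. intros w' o' E'. rewrite L0. apply hmin; [exact o'|congruence]. }
  rewrite <- L0. f_equal. now apply reduced_word_unique.
Qed.

Lemma word_length_1 : word_length e = 0.
Proof.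
  enough (word_length (ev []) <= 0) by (simpl in *; lia).
  apply word_length_le; [apply (proj1 hB); exists []; split; auto|]; apply word_over_nil.
Qed.

Lemma word_length_mul a b : S a -> S b -> word_length (a ** b) <= word_length a + word_length b.
Proof.
  intros ha hb.
  destruct (word_length_spec _ ha) as [[w1 [o1 [<- <-]]] _].
  destruct (word_length_spec _ hb) as [[w2 [o2 [<- <-]]] _].
  rewrite <- ev_app, <- length_app. apply word_length_le; [|now apply word_over_app].
  apply (proj1 hB). exists (w1 ++ w2). split; auto. now apply word_over_app.
Qed.

Lemma word_length_inv a : S a -> word_length (a^-) <= word_length a.
Proof.
  intro ha. destruct (word_length_spec _ ha) as [[w [o [<- <-]]] _].
  rewrite <- ev_word_inv, <- (length_word_inv H w).
  apply word_length_le; [|now apply word_over_inv].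
  apply (proj1 hB). exists (word_inv H w). split; auto. now apply word_over_inv.
Qed.

Lemma word_length_gpow y m : S y -> y <> e -> 1 <= m ->
  word_length y + m - 1 <= word_length (gpow H y m).
Proof.
  intros hy hne hm.
  destruct (word_length_spec _ hy) as [[w [o [<- <-]]] hmin].
  assert (r : reduced H w).
  { apply minimal_word_reduced; auto. }
  assert (hw : w <> []) by (intros ->; now apply hne).
  destruct (reduced_power_word H B w m o r hw hm) as [W [oW [rW [<- LW]]]].
  now rewrite word_length_reduced.
Qed.

Lemma free_basis_subgroup : is_subgroup H S.
Proof.
  destruct (span_subgroup H B) as [h1 [hmul hinv]].
  pose proof (proj1 hB) as hS. unfold generates in hS.
  split; [|split].
  - now apply hS.
  - intros x y hx hy. apply hS, hmul; now apply hS.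
  - intros x hx. apply hS, hinv; now apply hS.
Qed.

(* Since [z^m = f^- y], the growth of powers bounds [m] by the lengths of [f] and [y]. *)
Lemma word_length_tower_step y z f m : S y -> S z -> S f -> z <> e -> 1 <= m ->
  y = f ** gpow H z m -> word_length z + m <= word_length f + word_length y + 1.
Proof.
  intros hy hz hf hne hm E.
  destruct free_basis_subgroup as [_ [_ hinv]].
  assert (Ez : gpow H z m = f^- ** y)
    by now rewrite E, gmul_assoc, gmul_Vl, gmul_1l.
  pose proof (word_length_gpow z m hz hne hm).
  pose proof (word_length_mul (f^-) y (hinv _ hf) hy).
  pose proof (word_length_inv f hf).
  rewrite Ez in *. lia.
Qed.

Lemma word_length_words (l : list H) w : (forall a, In a l -> S a) ->
  word_over H (fun y => In y l) w ->
  word_length (ev w) <= length w * list_sum (map word_length l).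
Proof.
  intro hl. destruct free_basis_subgroup as [_ [_ hinv]].
  induction w as [|a w IH]; intro o.
  - simpl. now rewrite word_length_1.
  - apply word_over_cons in o. destruct o as [oa o].
    assert (hw : S (ev w))
      by (apply subgroup_word_closed; [exact free_basis_subgroup|intros b hb; apply hl, o, hb]).
    assert (ha : S (letter_val H a)) by (destruct a as [[] y]; unfold letter_val; simpl in *; auto).
    assert (hC : word_length (letter_val H a) <= list_sum (map word_length l)).
    { assert (word_length (snd a) <= list_sum (map word_length l))
        by (apply list_sum_in, in_map, oa).
      destruct a as [[] y]; unfold letter_val; simpl in *; auto.
      pose proof (word_length_inv y (hl y oa)). lia. }
    rewrite ev_cons. pose proof (word_length_mul _ _ ha hw).
    specialize (IH o). simpl. lia.
Qed.

End FreeBasis.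

Lemma no_infinite_descent (a : nat -> nat) N : ~ (forall n, N <= n -> a (S n) < a n).
Proof.
  intro h. assert (hk : forall k, a (N + k) + k <= a N).
  { induction k as [|k IH]; [rewrite !Nat.add_0_r; lia|].
    specialize (h (N + k) ltac:(lia)). replace (N + S k) with (S (N + k)) by lia. lia. }
  specialize (hk (S (a N))). lia.
Qed.

Theorem aleph1_free_no_power_tower (H : group) (l : list H) (f x : nat -> H) (m : nat -> nat) :
  aleph1_free H ->
  (forall n, f n <> gone H) ->
  (forall n, exists w, word_over H (fun y => In y l) w /\ word_eval H w = f n /\
     n * length w + 2 <= m n) ->
  (forall n, x n = gmul H (f n) (gpow H (x (S n)) (m n))) -> False.
Proof.
  intros Hal hf hw hx.
  destruct (countable_subgroup_containing H l x) as [X [hX [hXc [Xl Xx]]]].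
  destruct (Hal X hX hXc) as [B hB].
  set (len := word_length H B).
  set (C := list_sum (map len l)).
  assert (hlen_f : forall n, C <= n -> X (f n) /\ len (f n) + 2 <= m n).
  { intros n hn. destruct (hw n) as [w [o [<- hm]]].
    split; [apply subgroup_word_closed; [exact hX|intros b hb; apply Xl, o, hb]|].
    pose proof (word_length_words H X B hB l w Xl o) as hbound.
    fold len C in hbound. nia. }
  assert (step : forall n, C <= n -> x (S n) <> gone H -> len (x (S n)) < len (x n)).
  { intros n hn hne. destruct (hlen_f n hn) as [Xf hm].
    pose proof (word_length_tower_step H X B hB _ _ _ (m n) (Xx n) (Xx (S n)) Xf hne
      ltac:(lia) (hx n)) as htower. fold len in htower. lia. }
  assert (nontrivial : forall n, C <= n -> x (S n) <> gone H).
  { intros n hn h0.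
    assert (h1 : x (S (S n)) <> gone H).
    { intro h. apply (hf (S n)). now rewrite hx, h, gpow_1, gmul_1r in h0. }
    pose proof (step (S n) ltac:(lia) h1) as hlt. rewrite h0 in hlt.
    unfold len in hlt. rewrite (word_length_1 H X B hB) in hlt. lia. }
  apply (no_infinite_descent (fun n => len (x n)) C). intros n hn. now apply step, nontrivial.
Qed.

(** * Topology *)

Section Topology.
Variable T : Type.
Variable t : topology T.

Lemma open_ext (A B : T -> Prop) : (forall x, A x <-> B x) -> is_open t A -> is_open t B.
Proof.
  intros h hA. replace B with A; auto.
  apply functional_extensionality; intro x. apply propositional_extensionality; auto.
Qed.

Lemma open_of_local (A : T -> Prop) :
  (forall y, A y -> exists U, is_open t U /\ U y /\ forall z, U z -> A z) -> is_open t A.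
Proof.
  intro h. apply (open_ext (fun x => exists U, (is_open t U /\ forall z, U z -> A z) /\ U x)).
  - intro x. split; [intros [U [[_ hU] hx]]; auto|].
    intro hx. destruct (h x hx) as [U [o [hU hs]]]. eauto.
  - apply open_union. intros U [o _]; auto.
Qed.

Definition closed (A : T -> Prop) := is_open t (fun x => ~ A x).

Definition cont (f : T -> T) := forall x W, is_open t W -> W (f x) ->
  exists U, is_open t U /\ U x /\ forall y, U y -> W (f y).

Lemma open_preimage f W : cont f -> is_open t W -> is_open t (fun y => W (f y)).
Proof.
  intros hf hW. apply open_of_local. intros y hy.
  destruct (hf y W hW hy) as [U [o [hU hs]]]. eauto.
Qed.

Lemma closed_preimage f A : cont f -> closed A -> closed (fun y => A (f y)).
Proof. intros hf hA. exact (open_preimage f _ hf hA). Qed.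

Lemma closed_inter A B : closed A -> closed B -> closed (fun x => A x /\ B x).
Proof.
  intros hA hB. apply open_of_local. intros y hy. apply not_and_or in hy.
  destruct hy as [hy|hy]; [exists (fun x => ~ A x)|exists (fun x => ~ B x)];
    repeat split; auto; intros z hz [h1 h2]; auto.
Qed.

Definition closure (W : T -> Prop) y := forall U, is_open t U -> U y -> exists z, U z /\ W z.

Lemma closure_closed W : closed (closure W).
Proof.
  apply open_of_local. intros y hy. apply not_all_ex_not in hy. destruct hy as [U hU].
  apply imply_to_and in hU. destruct hU as [o hU].
  apply imply_to_and in hU. destruct hU as [hy hU].
  exists U. split; [exact o|split; [exact hy|]]. intros z hz hc. apply hU.
  destruct (hc U o hz) as [x hx]. eauto.
Qed.

Lemma subset_closure W y : W y -> closure W y.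
Proof. intros h U _ hU. eauto. Qed.

Lemma compact_inter_closed K A : Defs.compact t K -> closed A ->
  Defs.compact t (fun x => K x /\ A x).
Proof.
  intros hK hA Fam hF hc.
  destruct (hK (fun U => Fam U \/ U = (fun x => ~ A x))) as [l [hl hcov]].
  - intros U [h| ->]; auto.
  - intros x hx. destruct (classic (A x)) as [ha|ha].
    + destruct (hc x (conj hx ha)) as [U [h1 h2]]. eauto.
    + exists (fun x => ~ A x). auto.
  - assert (hdrop : forall l, (forall U, In U l -> Fam U \/ U = (fun x => ~ A x)) ->
      exists l', (forall U, In U l' -> Fam U) /\
        forall x, A x -> (exists U, In U l /\ U x) -> exists U, In U l' /\ U x).
    { induction l0 as [|U0 l0 IH]; intro h.
      - exists []. split; [intros _ []|]. intros x _ [U [[] _]].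
      - destruct IH as [l' [h1 h2]]; [intros U hU; apply h; simpl; auto|].
        destruct (h U0 (or_introl eq_refl)) as [hU0|hU0].
        + exists (U0 :: l'). split; [intros U [<-|hU]; auto|].
          intros x hx [U [[<-|hU] hxU]]; [exists U0; simpl; auto|].
          destruct (h2 x hx ltac:(eauto)) as [V [hV hxV]]. exists V; simpl; auto.
        + exists l'. split; auto. intros x hx [U [[<-|hU] hxU]]; [subst U0; contradiction|eauto]. }
    destruct (hdrop l hl) as [l' [h1 h2]]. exists l'. split; auto.
    intros x [hx ha]. apply h2; auto.
Qed.

Lemma hausdorff_compact_closed K : hausdorff t -> Defs.compact t K -> closed K.
Proof.
  intros hH hK. apply open_of_local. intros y hy.
  set (Sep := fun U => exists V, is_open t U /\ is_open t V /\ V y /\ forall z, ~ (U z /\ V z)).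
  destruct (hK Sep) as [l [hl hcov]].
  - intros U [V [o _]]; auto.
  - intros x hx. assert (hxy : x <> y) by (intros ->; auto).
    destruct (hH x y hxy) as [U [V [o1 [o2 [h1 [h2 h3]]]]]]. exists U. split; [exists V|]; auto.
  - assert (hsep : forall l, (forall U, In U l -> Sep U) ->
      exists V, is_open t V /\ V y /\ forall U, In U l -> forall z, ~ (U z /\ V z)).
    { induction l0 as [|U0 l0 IH]; intro h.
      - exists (fun _ => True). repeat split; [apply open_full|intros _ []].
      - destruct IH as [V [o [hV hd]]]; [intros; apply h; simpl; auto|].
        destruct (h U0 (or_introl eq_refl)) as [V0 [_ [o0 [hV0 hd0]]]].
        exists (fun x => V x /\ V0 x). repeat split; [apply open_inter|..]; auto.
        intros U [<-|hU] z [h1 [h2 h3]]; [apply (hd0 z)|apply (hd U hU z)]; auto. }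
    destruct (hsep l hl) as [V [o [hV hd]]]. exists V. repeat split; auto.
    intros z hz hKz. destruct (hcov z hKz) as [U [hU hUz]]. apply (hd U hU z); auto.
Qed.

Lemma hausdorff_singleton_closed w : hausdorff t -> closed (fun y => y = w).
Proof.
  intro hH. apply open_of_local. intros y hy.
  destruct (hH y w hy) as [U [V [o1 [o2 [h1 [h2 h3]]]]]].
  exists U. repeat split; auto. intros z hz ->. apply (h3 w); auto.
Qed.

Lemma compact_image f K : cont f -> Defs.compact t K ->
  Defs.compact t (fun y => exists z, K z /\ f z = y).
Proof.
  intros hf hK Fam hF hc.
  set (Pre := fun V => exists U, Fam U /\ V = (fun z => U (f z))).
  destruct (hK Pre) as [l [hl hcov]].
  - intros V [U [hU ->]]. apply open_preimage; auto.
  - intros z hz. destruct (hc (f z) ltac:(eauto)) as [U [hU hUz]].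
    exists (fun z => U (f z)). split; [exists U|]; auto.
  - assert (hpush : forall l, (forall V, In V l -> Pre V) ->
      exists l', (forall U, In U l' -> Fam U) /\
        forall z, (exists V, In V l /\ V z) -> exists U, In U l' /\ U (f z)).
    { induction l0 as [|V0 l0 IH]; intro h.
      - exists []. split; [intros _ []|]. intros z [V [[] _]].
      - destruct IH as [l' [h1 h2]]; [intros; apply h; simpl; auto|].
        destruct (h V0 (or_introl eq_refl)) as [U0 [hU0 ->]].
        exists (U0 :: l'). split; [intros U [<-|hU]; auto|].
        intros z [V [[<-|hV] hVz]]; [exists U0; simpl; auto|].
        destruct (h2 z ltac:(eauto)) as [U [hU hUz]]. exists U; simpl; auto. }
    destruct (hpush l hl) as [l' [h1 h2]]. exists l'. split; auto.
    intros y [z [hz <-]]. apply h2. auto.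
Qed.

Lemma compact_nested_inter K (E : nat -> T -> Prop) : Defs.compact t K ->
  (forall j, closed (E j)) -> (forall j y, E j y -> K y) ->
  (forall j y, E (S j) y -> E j y) -> (forall j, exists y, E j y) ->
  exists y, forall j, E j y.
Proof.
  intros hK hc hs hd hn. apply NNPP. intro hno.
  destruct (hK (fun U => exists j, U = (fun y => ~ E j y))) as [l [hl hcov]].
  - intros U [j ->]. apply hc.
  - intros x hx. assert (exists j, ~ E j x) as [j hj].
    { apply not_all_ex_not. intro h. apply hno. eauto. }
    exists (fun y => ~ E j y). eauto.
  - assert (mono : forall j k y, j <= k -> E k y -> E j y)
      by (intros j k y hjk; induction hjk; auto).
    assert (hbound : forall l, (forall U, In U l -> exists j, U = (fun y => ~ E j y)) ->
      exists N, forall U, In U l -> forall y, U y -> ~ E N y).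
    { induction l0 as [|U0 l0 IH]; intro h; [exists 0; intros _ []|].
      destruct IH as [N hN]; [intros; apply h; simpl; auto|].
      destruct (h U0 (or_introl eq_refl)) as [j ->].
      exists (Nat.max N j). intros U [<-|hU] y hy hE.
      - apply hy, (mono j (Nat.max N j)); auto. lia.
      - apply (hN U hU y hy), (mono N (Nat.max N j)); auto. lia. }
    destruct (hbound l hl) as [N hN]. destruct (hn N) as [y hy].
    destruct (hcov y (hs N y hy)) as [U [hU hUy]]. apply (hN U hU y hUy hy).
Qed.

End Topology.

Section TopologicalGroup.
Variable G : group.
Variable t : topology G.
Hypothesis TG : topological_group G t.

Lemma cont_const c : cont G t (fun _ => c).
Proof. intros x W o hW. exists (fun _ => True). split; [apply open_full|auto]. Qed.

Lemma cont_id : cont G t (fun y => y).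
Proof. intros x W o hW. exists W. auto. Qed.

Lemma cont_mul f h : cont G t f -> cont G t h -> cont G t (fun y => gmul G (f y) (h y)).
Proof.
  intros hf hh x W o hW.
  destruct (proj1 TG W (f x) (h x) o hW) as [U [V [oU [oV [hU [hV hUV]]]]]].
  destruct (hf x U oU hU) as [U1 [o1 [h1 s1]]]. destruct (hh x V oV hV) as [V1 [o2 [h2 s2]]].
  exists (fun y => U1 y /\ V1 y). split; [apply open_inter; auto|]. split; auto.
  intros y [a b]. apply hUV; auto.
Qed.

Lemma cont_inv : cont G t (fun y => ginv G y).
Proof. intros x W o hW. exists (fun y => W (ginv G y)). split; [apply (proj2 TG)|]; auto. Qed.

Lemma cont_gpow m : cont G t (fun y => gpow G y m).
Proof. induction m; simpl; [apply cont_const|apply cont_mul; auto; apply cont_id]. Qed.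

(* With [A B] inside [V] and [y] in the closure of [A], the neighbourhood
   [y B^-1] of [y] meets [A] in some [z], so [y = z (z^- y)] lies in [A B]. *)
Lemma closed_neighbourhood V : is_open t V -> V (gone G) ->
  exists W, is_open t W /\ W (gone G) /\ forall y, closure G t W y -> V y.
Proof.
  intros o hV. rewrite <- (gmul_1l G (gone G)) in hV.
  destruct (proj1 TG V _ _ o hV) as [A [B [oA [oB [hA [hB hAB]]]]]].
  exists A. repeat split; auto. intros y hy.
  assert (cN : cont G t (fun z => gmul G (ginv G z) y))
    by (apply cont_mul; [apply cont_inv|apply cont_const]).
  destruct (hy _ (open_preimage G t _ B cN oB)) as [z [hz1 hz2]].
  { simpl. now rewrite gmul_Vl. }
  replace y with (gmul G z (gmul G (ginv G z) y)); [apply hAB; auto|].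
  now rewrite gmul_assoc, gmul_Vr, gmul_1l.
Qed.

Lemma compact_neighbourhood V : locally_compact t -> is_open t V -> V (gone G) ->
  exists O Z, is_open t O /\ O (gone G) /\ Defs.compact t Z /\
    (forall y, O y -> Z y) /\ (forall y, Z y -> V y).
Proof.
  intros hlc o hV. destruct (hlc (gone G)) as [U1 [K1 [o1 [h1 [c1 s1]]]]].
  destruct (closed_neighbourhood V o hV) as [W [oW [hW sW]]].
  exists (fun y => U1 y /\ W y), (fun y => K1 y /\ closure G t W y).
  repeat split; auto.
  - now apply open_inter.
  - apply compact_inter_closed; [exact c1|apply closure_closed].
  - now apply s1.
  - now apply subset_closure.
  - intros y [_ hy]. now apply sW.
Qed.

End TopologicalGroup.

Lemma neighbourhood_finite_inter T (t : topology T) (x0 : T) (Q : nat -> T -> Prop) :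
  (forall n, exists U, is_open t U /\ U x0 /\ forall y, U y -> Q n y) ->
  forall k, exists U, is_open t U /\ U x0 /\ forall y, U y -> forall n, n <= k -> Q n y.
Proof.
  intros h k. induction k as [|k IH].
  - destruct (h 0) as [U [o [h1 h2]]]. exists U. repeat split; auto.
    intros y hy n hn. replace n with 0 by lia. auto.
  - destruct IH as [U [o [h1 h2]]]. destruct (h (S k)) as [V [oV [hV sV]]].
    exists (fun y => U y /\ V y). split; [now apply open_inter|]. split; auto.
    intros y [hU hV'] n hn. destruct (Nat.eq_dec n (S k)) as [->|hne]; auto.
    apply h2; auto. lia.
Qed.

(** * Inverse limits *)

Lemma dependent_choice {A} (I : nat -> A -> Prop) (R : nat -> A -> A -> Prop) (a0 : A) :
  I 0 a0 -> (forall n a, I n a -> exists b, I (S n) b /\ R n a b) ->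
  exists u : nat -> A, forall n, I n (u n) /\ R n (u n) (u (S n)).
Proof.
  intros h0 hstep.
  set (next := fun n a => epsilon (inhabits a) (fun b => I (S n) b /\ R n a b)).
  set (u := fix u n := match n with 0 => a0 | S k => next k (u k) end).
  assert (hnext : forall n a, I n a -> I (S n) (next n a) /\ R n a (next n a))
    by (intros n a ha; apply epsilon_spec, hstep, ha).
  assert (hu : forall n, I n (u n)) by (induction n; [exact h0|apply hnext, IHn]).
  exists u. intro n. split; [apply hu|apply hnext, hu].
Qed.

Section Composition.
Variable T : Type.
Variable f : nat -> T -> T.

Fixpoint compose_from (n j : nat) (y : T) : T :=
  match j with 0 => y | S j' => f n (compose_from (S n) j' y) end.

Lemma compose_from_S_r j : forall n y,
  compose_from n (S j) y = compose_from n j (f (n + j) y).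
Proof.
  induction j as [|j IH]; intros n y.
  - simpl. now rewrite Nat.add_0_r.
  - change (compose_from n (S (S j)) y) with (f n (compose_from (S n) (S j) y)).
    rewrite IH. now replace (S n + j) with (n + S j) by lia.
Qed.

End Composition.

Lemma compose_from_ext T (f f' : nat -> T -> T) j : forall n y,
  (forall i, n <= i < n + j -> f i = f' i) -> compose_from T f n j y = compose_from T f' n j y.
Proof.
  induction j as [|j IH]; intros n y h; [reflexivity|].
  simpl. rewrite (IH (S n)), (h n); [reflexivity|lia|].
  intros i hi. apply h. lia.
Qed.

Lemma compose_from_cont T (t : topology T) f j :
  (forall n, cont T t (f n)) -> forall n, cont T t (compose_from T f n j).
Proof.
  intro hf. induction j as [|j IH]; intro n.
  - intros x W o hW. exists W. auto.
  - intros x W o hW. destruct (hf n _ W o hW) as [U [oU [hU sU]]].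
    destruct (IH (S n) x U oU hU) as [V [oV [hV sV]]]. exists V. simpl. auto.
Qed.

Section CompactInverseLimit.
Variable T : Type.
Variable t : topology T.
Hypothesis hH : hausdorff t.
Variable Z : nat -> T -> Prop.
Variable f : nat -> T -> T.
Hypothesis Z_compact : forall n, Defs.compact t (Z n).
Hypothesis Z_nonempty : forall n, exists y, Z n y.
Hypothesis f_cont : forall n, cont T t (f n).
Hypothesis f_maps : forall n y, Z (S n) y -> Z n (f n y).

Local Notation F := (compose_from T f).

Definition image_from n j y := exists z, Z (n + j) z /\ F n j z = y.

Lemma image_from_closed n j : closed T t (image_from n j).
Proof.
  apply hausdorff_compact_closed; [exact hH|].
  apply compact_image; [now apply compose_from_cont|apply Z_compact].
Qed.

Lemma image_from_S n j y : image_from n (S j) y -> image_from n j y.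
Proof.
  intros [z [hz <-]]. rewrite compose_from_S_r.
  exists (f (n + j) z). split; auto. apply f_maps. now rewrite <- Nat.add_succ_r.
Qed.

Lemma image_from_Z n j y : image_from n j y -> Z n y.
Proof.
  revert y. induction j as [|j IH]; intros y h.
  - destruct h as [z [hz <-]]. now rewrite Nat.add_0_r in hz.
  - now apply IH, image_from_S.
Qed.

Lemma image_from_nonempty n j : exists y, image_from n j y.
Proof. destruct (Z_nonempty (n + j)) as [z hz]. now exists (F n j z), z. Qed.

Definition limit_set n y := forall j, image_from n j y.

Lemma limit_set_nonempty : exists y, limit_set 0 y.
Proof.
  apply (compact_nested_inter T t (Z 0) (image_from 0)); auto using image_from_closed,
    image_from_S, image_from_nonempty. apply image_from_Z.
Qed.

Lemma limit_set_lift n w : limit_set n w -> exists v, limit_set (S n) v /\ f n v = w.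
Proof.
  intro hw.
  destruct (compact_nested_inter T t (Z (S n)) (fun j v => image_from (S n) j v /\ f n v = w))
    as [v hv].
  - apply Z_compact.
  - intro j. apply closed_inter; [apply image_from_closed|].
    apply (closed_preimage T t (f n) (fun y => y = w)); auto.
    now apply hausdorff_singleton_closed.
  - intros j y [h _]. now apply (image_from_Z _ j).
  - intros j y [h1 h2]. split; auto. now apply image_from_S.
  - intro j. destruct (hw (S j)) as [z [hz E]]. exists (F (S n) j z). split; auto.
    exists z. split; [now replace (S n + j) with (n + S j) by lia|reflexivity].
  - exists v. split; [intro j; apply hv|apply (hv 0)].
Qed.

Lemma compact_inverse_limit : exists h : nat -> T, forall n, h n = f n (h (S n)).
Proof.
  destruct limit_set_nonempty as [w0 hw0].
  destruct (dependent_choice limit_set (fun n v v' => f n v' = v) w0 hw0) as [h hh].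
  { intros n v hv. destruct (limit_set_lift n v hv) as [v' [h1 h2]]. eauto. }
  exists h. intro n. symmetry. apply hh.
Qed.

End CompactInverseLimit.

Section Metric.
Local Open Scope R_scope.
Variable T : Type.
Variable t : topology T.
Variable d : T -> T -> R.
Hypothesis dm : is_metric d.
Hypothesis di : metric_induces d t.

Lemma metric_sym x y : d x y = d y x.
Proof. apply dm. Qed.

Lemma metric_triangle x y z : d x z <= d x y + d y z.
Proof. apply dm. Qed.

Lemma metric_ge0 x y : 0 <= d x y.
Proof. apply dm. Qed.

Lemma metric_refl x : d x x = 0.
Proof. now apply dm. Qed.

Lemma metric_eq0 x y : d x y = 0 -> x = y.
Proof. apply dm. Qed.

Lemma ball_open c r : is_open t (fun y => d c y < r).
Proof.
  apply di. intros y hy. exists (r - d c y). split; [lra|].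
  intros z hz. pose proof (metric_triangle c y z). lra.
Qed.

Lemma cont_metric f x eps : cont T t f -> 0 < eps ->
  exists del, 0 < del /\ forall y, d x y < del -> d (f x) (f y) < eps.
Proof.
  intros hf he.
  destruct (hf x (fun y => d (f x) y < eps) (ball_open _ _)) as [U [o [hU sU]]].
  { rewrite metric_refl. exact he. }
  destruct (proj1 (di U) o x hU) as [del [hd sd]]. eauto.
Qed.

Definition converges (u : nat -> T) l :=
  forall eps, 0 < eps -> exists N, forall n, (N <= n)%nat -> d (u n) l < eps.

Lemma converges_unique u a b : converges u a -> converges u b -> a = b.
Proof.
  intros ha hb. apply metric_eq0, NNPP. intro hne.
  assert (hp : 0 < d a b / 2) by (pose proof (metric_ge0 a b); lra).
  destruct (ha _ hp) as [N1 h1]. destruct (hb _ hp) as [N2 h2].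
  specialize (h1 (N1 + N2)%nat ltac:(lia)). specialize (h2 (N1 + N2)%nat ltac:(lia)).
  pose proof (metric_triangle a (u (N1 + N2)%nat) b). rewrite metric_sym in h1. lra.
Qed.

Lemma converges_cont f u l : cont T t f -> converges u l -> converges (fun n => f (u n)) (f l).
Proof.
  intros hf hu eps he. destruct (cont_metric f l eps hf he) as [del [hd sd]].
  destruct (hu del hd) as [N hN]. exists N. intros n hn.
  rewrite metric_sym. apply sd. rewrite metric_sym. now apply hN.
Qed.

Lemma half_pow_pos k : 0 < (/2) ^ k.
Proof. apply pow_lt. lra. Qed.

Lemma half_pow_antimono k l : (k <= l)%nat -> (/2) ^ l <= (/2) ^ k.
Proof.
  intro hkl. replace l with (k + (l - k))%nat by lia. rewrite pow_add.
  pose proof (half_pow_pos k).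
  assert ((/2) ^ (l - k) <= 1) by (rewrite <- (pow1 (l - k)); apply pow_incr; lra).
  nra.
Qed.

Lemma half_pow_small eps : 0 < eps -> exists N, forall j, (N <= j)%nat -> 2 * (/2) ^ j < eps.
Proof.
  intro he.
  destruct (pow_lt_1_zero (/2) ltac:(rewrite Rabs_pos_eq; lra) (eps / 2) ltac:(lra)) as [N hN].
  exists N. intros j hj. specialize (hN j hj).
  rewrite Rabs_pos_eq in hN; [lra|apply Rlt_le, half_pow_pos].
Qed.

Lemma geometric_cauchy (u : nat -> T) :
  (forall j, d (u j) (u (S j)) <= (/2) ^ j) ->
  forall j k, (j <= k)%nat -> d (u j) (u k) <= 2 * (/2) ^ j.
Proof.
  intros hu j k hjk. replace k with (j + (k - j))%nat by lia.
  enough (hi : forall i, d (u j) (u (j + i)%nat) <= 2 * (/2) ^ j - 2 * (/2) ^ (j + i))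
    by (pose proof (half_pow_pos (j + (k - j))); specialize (hi (k - j)%nat); lra).
  induction i as [|i IH].
  - rewrite Nat.add_0_r, metric_refl. lra.
  - pose proof (metric_triangle (u j) (u (j + i)%nat) (u (j + S i)%nat)).
    replace (j + S i)%nat with (S (j + i)) in * by lia.
    pose proof (hu (j + i)%nat). simpl pow. lra.
Qed.

Hypothesis dc : metric_complete d.

Lemma geometric_converges (u : nat -> T) :
  (forall j, d (u j) (u (S j)) <= (/2) ^ j) -> exists l, converges u l.
Proof.
  intro hu. apply dc. intros eps he. destruct (half_pow_small eps he) as [N hN].
  exists N. intros a b ha hb. destruct (Nat.le_ge_cases a b) as [hab|hab].
  - pose proof (geometric_cauchy u hu a b hab). pose proof (hN a ha). lra.
  - pose proof (geometric_cauchy u hu b a hab). pose proof (hN b hb).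
    rewrite metric_sym. lra.
Qed.

Variable f : nat -> T -> T.
Hypothesis f_cont : forall n, cont T t (f n).
Variable a : T.
Local Notation F := (compose_from T f).
Hypothesis orbit_geometric : forall n j, d (F n j a) (F n (S j) a) <= (/2) ^ j.

(* [h n] is the limit of [F n j a]; since [F n (S j) a = f n (F (S n) j a)],
   continuity of [f n] gives [h n = f n (h (S n))]. *)
Lemma metric_inverse_limit : exists h : nat -> T, forall n, h n = f n (h (S n)).
Proof.
  assert (hlim : forall n, exists l, converges (fun j => F n j a) l)
    by (intro n; apply geometric_converges, orbit_geometric).
  set (h := fun n => epsilon (inhabits a) (converges (fun j => F n j a))).
  assert (hh : forall n, converges (fun j => F n j a) (h n))
    by (intro n; apply epsilon_spec, hlim).
  exists h. intro n. apply (converges_unique (fun j => F n (S j) a)).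
  - intros eps he. destruct (hh n eps he) as [N hN]. exists N. intros j hj. apply hN. lia.
  - exact (converges_cont (f n) _ _ (f_cont n) (hh (S n))).
Qed.

End Metric.

(** * Power towers *)

Section Tower.
Variable G : group.
Variable t : topology G.
Hypothesis TG : topological_group G t.
Variable P : G -> Prop.
Hypothesis P_near_1 : forall U, is_open t U -> U (gone G) -> exists g, U g /\ P g.
Variable M : nat -> G -> nat.

Definition tower_step (g : nat -> G) n y := gmul G (g n) (gpow G y (M n (g n))).

Lemma tower_step_cont g n : cont G t (tower_step g n).
Proof. apply cont_mul; auto using cont_const, cont_gpow. Qed.

Lemma tower_step_1 g n : tower_step g n (gone G) = g n.
Proof. unfold tower_step. now rewrite gpow_1, gmul_1r. Qed.

Section LocallyCompact.
Hypothesis LC : locally_compact t.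
Hypothesis HD : hausdorff t.

Record lc_state := LcState { st_open : G -> Prop; st_compact : G -> Prop; st_point : G }.

Definition lc_good (s : lc_state) :=
  is_open t (st_open s) /\ st_open s (gone G) /\ Defs.compact t (st_compact s) /\
  (forall y, st_open s y -> st_compact s y) /\ st_open s (st_point s) /\ P (st_point s).

Definition lc_next n (s s' : lc_state) :=
  forall y, st_compact s' y -> st_open s (tower_step (fun _ => st_point s) n y).

Lemma lc_good_inside O : is_open t O -> O (gone G) ->
  exists s, lc_good s /\ forall y, st_compact s y -> O y.
Proof.
  intros o hO.
  destruct (compact_neighbourhood G t TG O LC o hO) as [O' [Z [oO' [hO' [cZ [sO' sZ]]]]]].
  destruct (P_near_1 O' oO' hO') as [g [hg Pg]].
  exists (LcState O' Z g). repeat split; auto.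
Qed.

Lemma lc_step n s : lc_good s -> exists s', lc_good s' /\ lc_next n s s'.
Proof.
  intros [o [_ [_ [_ [hg _]]]]].
  apply lc_good_inside; [apply (open_preimage G t); [apply tower_step_cont|exact o]|].
  now rewrite tower_step_1.
Qed.

Lemma tower_locally_compact :
  exists g h : nat -> G, (forall n, P (g n)) /\ forall n, h n = tower_step g n (h (S n)).
Proof.
  destruct (lc_good_inside (fun _ => True)) as [s0 [hs0 _]]; [apply open_full|exact I|].
  destruct (dependent_choice (fun _ => lc_good) lc_next s0 hs0) as [u hu].
  { intros n s hs. now apply lc_step. }
  set (g := fun n => st_point (u n)).
  destruct (compact_inverse_limit G t HD (fun n => st_compact (u n)) (tower_step g))
    as [h hh].
  - intro n. apply (hu n).
  - intro n. exists (gone G). apply (hu n), (hu n).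
  - apply tower_step_cont.
  - intros n y hy. apply (hu n), (hu n), hy.
  - exists g, h. split; [intro n; apply (hu n)|exact hh].
Qed.

End LocallyCompact.

Section Metrizable.
Variable d : G -> G -> R.
Hypothesis dm : is_metric d.
Hypothesis di : metric_induces d t.
Hypothesis dc : metric_complete d.

Local Notation F g := (compose_from G (tower_step g)).

(* Choosing the [k]-th element [x] this way makes every orbit [F g n j 1]
   geometrically Cauchy, since [F g n (S j) 1 = F g n j (g (n + j))]. *)
Definition metric_good k (p : nat -> G) (x : G) :=
  P x /\ forall n, n <= k ->
    (d (F p n (k - n) (gone G)) (F p n (k - n) x) < (/2) ^ k)%R.

Lemma metric_good_exists k p : exists x, metric_good k p x.
Proof.
  destruct (neighbourhood_finite_inter G t (gone G)
    (fun n y => d (F p n (k - n) (gone G)) (F p n (k - n) y) < (/2) ^ k)%R)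
    with (k := k) as [U [o [h1 h2]]].
  - intro n.
    destruct (cont_metric G t d dm di (F p n (k - n)) (gone G) ((/2) ^ k)
      (compose_from_cont G t _ _ (tower_step_cont p) n) (half_pow_pos k)) as [del [hd sd]].
    exists (fun y => d (gone G) y < del)%R.
    split; [now apply ball_open|]. split; auto. rewrite metric_refl; auto.
  - destruct (P_near_1 U o h1) as [g [hg Pg]]. exists g. split; auto.
Qed.

Lemma tower_metrizable :
  exists g h : nat -> G, (forall n, P (g n)) /\ forall n, h n = tower_step g n (h (S n)).
Proof.
  set (R := fun k (p q : nat -> G) => metric_good k p (q k) /\ forall i, i <> k -> q i = p i).
  destruct (dependent_choice (fun _ _ => True) R (fun _ => gone G) I) as [u hu].
  { intros k p _. destruct (metric_good_exists k p) as [x hx].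
    exists (fun i => if Nat.eqb i k then x else p i). split; [exact I|split].
    - now rewrite Nat.eqb_refl.
    - intros i hi. now rewrite (proj2 (Nat.eqb_neq i k) hi). }
  set (g := fun i => u (S i) i).
  assert (agree : forall k i, i < k -> u k i = g i).
  { induction k as [|k IH]; intros i hi; [lia|].
    destruct (Nat.eq_dec i k) as [->|hne]; [reflexivity|].
    rewrite (proj2 (proj2 (hu k)) i hne). apply IH. lia. }
  assert (hg : forall k, metric_good k g (g k)).
  { intro k. destruct (proj2 (hu k)) as [[Pk hk] _]. split; auto.
    intros n hn. rewrite <- !(compose_from_ext G (tower_step (u k)) (tower_step g));
      [apply hk; auto| |];
      intros i hi; unfold tower_step; now rewrite agree by lia. }
  destruct (metric_inverse_limit G t d dm di dc (tower_step g) (tower_step_cont g) (gone G))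
    as [h hh].
  - intros n j. rewrite compose_from_S_r, tower_step_1.
    destruct (hg (n + j)) as [_ hk]. specialize (hk n ltac:(lia)).
    replace (n + j - n) with j in hk by lia.
    apply Rlt_le. eapply Rlt_le_trans; [exact hk|]. apply half_pow_antimono. lia.
  - exists g, h. split; [intro n; apply (hg n)|exact hh].
Qed.

End Metrizable.

Theorem tower_exists : completely_metrizable t \/ (locally_compact t /\ hausdorff t) ->
  exists g h : nat -> G, (forall n, P (g n)) /\ forall n, h n = tower_step g n (h (S n)).
Proof.
  intros [[d [dm [di dc]]]|[hlc hh]].
  - exact (tower_metrizable d dm di dc).
  - exact (tower_locally_compact hlc hh).
Qed.

End Tower.

Theorem lemma2p3 (G : group) (t : topology G) (H : group) (phi : G -> H) :
  topological_group G t ->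
  (completely_metrizable t \/ (locally_compact t /\ hausdorff t)) ->
  aleph1_free H ->
  is_hom G H phi ->
  forall F : H -> Prop, is_subgroup H F -> fin_gen_subgroup H F ->
  exists U : G -> Prop, is_open t U /\ U (gone G) /\
    forall x, U x -> F (phi x) -> phi x = gone H.
Proof.
  intros TG hcase Hal hphi F _ [l hl].
  apply NNPP. intro hno.
  set (P := fun g => F (phi g) /\ phi g <> gone H).
  assert (P_near_1 : forall U, is_open t U -> U (gone G) -> exists g, U g /\ P g).
  { intros U o h1. apply NNPP. intro hn. apply hno. exists U. repeat split; auto.
    intros x hx hF. apply NNPP. intro hne. apply hn. now exists x. }
  set (word_of := fun y => epsilon (inhabits [])
                    (fun w => word_over H (fun z => In z l) w /\ word_eval H w = y)).
  set (M := fun n g => n * length (word_of (phi g)) + 2).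
  destruct (tower_exists G t TG P P_near_1 M hcase) as [g [h [hg hh]]].
  apply (aleph1_free_no_power_tower H l (fun n => phi (g n)) (fun n => phi (h n))
           (fun n => M n (g n)) Hal).
  - intro n. apply hg.
  - intro n. exists (word_of (phi (g n))).
    enough (word_over H (fun z => In z l) (word_of (phi (g n))) /\
            word_eval H (word_of (phi (g n))) = phi (g n)) by (unfold M; repeat split; tauto || lia).
    apply epsilon_spec, hl, hg.
  - intro n. rewrite (hh n). unfold tower_step. now rewrite hphi, hom_gpow.
Qed.
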